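(* Let $\phi\in\,]0,\pi[$, $M\in\mathbb{R}$, $N>0$, let $\Sigma$ be the Keplerian branch around ${\rm O}$ in the plane ${\rm O}xy$ with equation $r=My+N$, and let $g$ be the affine map $(x_1,y_1)\mapsto(x_3,y_3)$ defined by $x_1=x_3-M\frac{\cos\phi}{\sin\phi}y_3-N\cos\phi$, $y_1=\frac{1}{\sin\phi}y_3$. Let $\Gamma$ be a Keplerian arc carried by $\Sigma$ whose endpoints ${\rm A}$ and ${\rm B}$ have the same ordinate $y_{\rm A}=y_{\rm B}$. Then the elapsed time $\Delta t=t_{\rm B}-t_{\rm A}$ of the image arc $g(\Gamma)$ equals that of $\Gamma$.
   Context: In the Euclidean plane ${\rm O}xy$, $r=\sqrt{x^2+y^2}$, Newton's system $\ddot q=-q/r^3$, energy $H=\frac12\|\dot q\|^2-\frac1r$. A Keplerian arc is the class, modulo time shifts, of a solution (extended through collisions by bouncing back along the same ray with the same energy) restricted to $[t_{\rm A},t_{\rm B}]$, $t_{\rm B}>t_{\rm A}$, with ends ${\rm A}=q(t_{\rm A})$, ${\rm B}=q(t_{\rm B})$ and elapsed time $\Delta t=t_{\rm B}-t_{\rm A}$. The image $g(\Sigma)$ is the Keplerian branch $r=x\cos\phi+yM\sin\phi+N\sin^2\phi$. The image arc $g(\Gamma)$ is the Keplerian arc on $g(\Sigma)$ obtained by mapping $\Gamma$ as an unparametrized oriented curve (including its number of turns around ${\rm O}$), traversed in the direction induced by $g$ from $g({\rm A})$ to $g({\rm B})$, with time parametrization given by Newton's system. *)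

From Stdlib Require Import Reals Lra.
Open Scope R_scope.

Definition rad (x y : R) : R := sqrt (x ^ 2 + y ^ 2).

Definition cont_on (a b : R) (f : R -> R) : Prop :=
  forall t, a <= t <= b -> forall eps, 0 < eps ->
    exists delta, 0 < delta /\
      forall u, a <= u <= b -> Rabs (u - t) < delta -> Rabs (f u - f t) < eps.

Definition newton_sol (x y : R -> R) (a b : R) : Prop :=
  cont_on a b x /\ cont_on a b y /\
  exists vx vy : R -> R,
    forall t, a < t < b ->
      derivable_pt_lim x t (vx t) /\ derivable_pt_lim y t (vy t) /\
      derivable_pt_lim vx t (- x t / (rad (x t) (y t)) ^ 3) /\
      derivable_pt_lim vy t (- y t / (rad (x t) (y t)) ^ 3).

Definition on_sigma (M N x y : R) : Prop := rad x y = M * y + N.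

Definition g_rel (phi M N x1 y1 x3 y3 : R) : Prop :=
  x1 = x3 - M * (cos phi / sin phi) * y3 - N * cos phi /\
  y1 = y3 / sin phi.

(* (x3,y3) on [sA,sB] is the image arc g(Gamma) of the arc (x,y) on [tA,tB]:
   a Newton solution whose oriented unparametrized curve is g o Gamma,
   i.e. it equals g o Gamma o h for an increasing continuous reparametrization
   h of [sA,sB] onto [tA,tB]. *)
Definition image_arc (phi M N : R) (x y : R -> R) (tA tB : R)
    (x3 y3 : R -> R) (sA sB : R) : Prop :=
  sA < sB /\ newton_sol x3 y3 sA sB /\
  exists h : R -> R,
    h sA = tA /\ h sB = tB /\ cont_on sA sB h /\
    (forall s1 s2, sA <= s1 -> s1 < s2 -> s2 <= sB -> h s1 < h s2) /\
    (forall s, sA <= s <= sB ->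
       g_rel phi M N (x (h s)) (y (h s)) (x3 s) (y3 s)).

From Stdlib Require Import Reals Lra Psatz.
From Coquelicot Require Import Coquelicot.
Open Scope R_scope.

(* The map g sends Sigma onto the Keplerian branch
   r = x cos phi + y M sin phi + N sin^2 phi, and r o g = r + x cos phi on Sigma.
   Along Gamma the angular momentum c satisfies c^2 = N and c y' r = x, so
   r o g = r (1 + c cos phi y'): the image points obey Newton's equations once
   time is changed by ds = (1 + c cos phi y') dt, i.e. s = t + c cos phi (y - y_A).
   Conversely, on a conic r = al x + be y + ga the squared angular momentum equals ga,
   so an increasing reparametrization between two Keplerian arcs of the same conic
   has unit speed, and the elapsed time of the image arc is
   Delta t + c cos phi (y_B - y_A), which is Delta t when y_A = y_B. *)

Ltac rewrite_Derive := repeat match goal with |- context [Derive ?f ?t] =>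
   erewrite (is_derive_unique f t) by eassumption end.
Ltac solve_ex_derive := repeat split; try (eexists; eassumption).

Lemma derivable_pt_lim_locally_eq f g t l a b :
  a < t < b -> (forall u, a < u < b -> f u = g u) ->
  derivable_pt_lim f t l -> derivable_pt_lim g t l.
Proof.
  intros Ht Heq Hf. apply is_derive_Reals in Hf. apply is_derive_Reals.
  apply (is_derive_ext_loc f); [|exact Hf].
  assert (Hd : 0 < Rmin (t - a) (b - t)) by (apply Rmin_pos; lra).
  exists (mkposreal _ Hd); intros u Hu. apply Heq.
  change (Rabs (u - t) < Rmin (t - a) (b - t)) in Hu.
  apply Rabs_lt_between' in Hu.
  assert (Rmin (t - a) (b - t) <= t - a) by apply Rmin_l.
  assert (Rmin (t - a) (b - t) <= b - t) by apply Rmin_r.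
  lra.
Qed.

(** * Continuity on a closed interval *)

Lemma cont_on_plus a b f g :
  cont_on a b f -> cont_on a b g -> cont_on a b (fun t => f t + g t).
Proof.
  intros Hf Hg t Ht eps He.
  destruct (Hf t Ht (eps / 2)) as [d1 [H1 K1]]; [lra|].
  destruct (Hg t Ht (eps / 2)) as [d2 [H2 K2]]; [lra|].
  exists (Rmin d1 d2); split; [now apply Rmin_pos|].
  intros u Hu Hd.
  assert (Rmin d1 d2 <= d1) by apply Rmin_l. assert (Rmin d1 d2 <= d2) by apply Rmin_r.
  specialize (K1 u Hu ltac:(lra)). specialize (K2 u Hu ltac:(lra)).
  replace (f u + g u - (f t + g t)) with ((f u - f t) + (g u - g t)) by ring.
  eapply Rle_lt_trans; [apply Rabs_triang|]. lra.
Qed.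

Lemma cont_on_scal a b k f : cont_on a b f -> cont_on a b (fun t => k * f t).
Proof.
  intros Hf t Ht eps He.
  assert (Hk := Rabs_pos k).
  destruct (Hf t Ht (eps / (Rabs k + 1))) as [d [Hd K]].
  { apply Rdiv_lt_0_compat; lra. }
  exists d; split; [exact Hd|]. intros u Hu Hdu. specialize (K u Hu Hdu).
  replace (k * f u - k * f t) with (k * (f u - f t)) by ring. rewrite Rabs_mult.
  apply (Rle_lt_trans _ (Rabs k * (eps / (Rabs k + 1)))).
  - apply Rmult_le_compat_l; lra.
  - apply (Rmult_lt_reg_r (Rabs k + 1)); [lra|]. field_simplify; nra.
Qed.

Lemma cont_on_const a b k : cont_on a b (fun _ => k).
Proof.
  intros t Ht eps He. exists 1; split; [lra|].
  intros. rewrite Rminus_diag, Rabs_R0; lra.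
Qed.

Lemma cont_on_id a b : cont_on a b (fun t => t).
Proof. intros t Ht eps He. exists eps; split; auto. Qed.

Lemma cont_on_comp a b c d f k : cont_on c d f -> cont_on a b k ->
  (forall s, a <= s <= b -> c <= k s <= d) -> cont_on a b (fun s => f (k s)).
Proof.
  intros Hf Hk Hr s Hs eps He.
  destruct (Hf (k s) (Hr s Hs) eps He) as [d1 [H1 K1]].
  destruct (Hk s Hs d1 H1) as [d2 [H2 K2]].
  exists d2; split; auto.
Qed.

Lemma cont_on_ext a b f g :
  (forall t, a <= t <= b -> f t = g t) -> cont_on a b f -> cont_on a b g.
Proof.
  intros E Hf t Ht eps He. destruct (Hf t Ht eps He) as [d [Hd K]].
  exists d; split; auto. intros u Hu Hdu. rewrite <- !E; auto.
Qed.

Lemma cont_on_continuity_pt a b f :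
  (forall t, a <= t <= b -> continuity_pt f t) -> cont_on a b f.
Proof.
  intros H t Ht eps He. specialize (H t Ht).
  unfold continuity_pt, continue_in, limit1_in, limit_in in H; simpl in H; unfold R_dist in H.
  destruct (H eps He) as [d [Hd K]]. exists d; split; auto.
  intros u Hu Hdu. destruct (Req_dec u t) as [->|Hne].
  - rewrite Rminus_diag, Rabs_R0; lra.
  - apply K. repeat split; auto.
Qed.

Lemma cont_on_derivable a b f df :
  (forall t, a <= t <= b -> derivable_pt_lim f t (df t)) -> cont_on a b f.
Proof.
  intros H. apply cont_on_continuity_pt. intros t Ht.
  exact (derivable_continuous_pt f t (exist _ (df t) (H t Ht))).
Qed.

(* Clamping to [a, b] extends a function continuous on [a, b] to a function
   continuous everywhere, which is what Stdlib's MVT and IVT expect. *)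
Definition clamp a b u := Rmax a (Rmin b u).

Lemma clamp_lipschitz a b u v : Rabs (clamp a b u - clamp a b v) <= Rabs (u - v).
Proof.
  unfold clamp, Rmax, Rmin; repeat destruct Rle_dec; unfold Rabs;
    repeat destruct Rcase_abs; lra.
Qed.

Lemma clamp_in a b u : a <= b -> a <= clamp a b u <= b.
Proof. intros; unfold clamp, Rmax, Rmin; repeat destruct Rle_dec; lra. Qed.

Lemma clamp_id a b u : a <= u <= b -> clamp a b u = u.
Proof. intros; unfold clamp, Rmax, Rmin; repeat destruct Rle_dec; lra. Qed.

Lemma continuity_clamp a b f : a <= b -> cont_on a b f ->
  continuity (fun u => f (clamp a b u)).
Proof.
  intros Hab Hc t.
  unfold continuity_pt, continue_in, limit1_in, limit_in; simpl; unfold R_dist.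
  intros eps Heps.
  destruct (Hc (clamp a b t) (clamp_in a b t Hab) eps Heps) as [d [Hd Hdd]].
  exists d; split; auto. intros u [_ Hu].
  apply Hdd; [now apply clamp_in|].
  eapply Rle_lt_trans; [apply clamp_lipschitz|exact Hu].
Qed.

Lemma cont_on_MVT f df a b : a < b -> cont_on a b f ->
  (forall t, a < t < b -> derivable_pt_lim f t (df t)) ->
  forall t1 t2, a <= t1 < t2 -> t2 <= b ->
  exists xi, t1 < xi < t2 /\ f t2 - f t1 = df xi * (t2 - t1).
Proof.
  intros Hab Hc Hd t1 t2 H1 H2.
  set (g := fun u => f (clamp a b u)).
  assert (Dg : forall c, t1 < c < t2 -> derivable_pt_lim g c (df c)).
  { intros c Hc'. apply (derivable_pt_lim_locally_eq f g c (df c) a b); [lra| |apply Hd; lra].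
    intros u Hu; unfold g; rewrite clamp_id; lra. }
  assert (pr1 : forall c, t1 < c < t2 -> derivable_pt g c)
    by (intros c Hc'; exact (exist _ (df c) (Dg c Hc'))).
  assert (pr2 : forall c, t1 < c < t2 -> derivable_pt id c)
    by (intros c _; apply derivable_pt_id).
  destruct (MVT g id t1 t2 pr1 pr2) as [c [Hc' Hm]]; [lra| | |].
  - intros; apply continuity_clamp; [lra|exact Hc].
  - intros; apply derivable_continuous_pt, derivable_pt_id.
  - exists c; split; [exact Hc'|].
    rewrite (derive_pt_eq_0 _ _ _ (pr1 c Hc') (Dg c Hc')) in Hm.
    rewrite (derive_pt_eq_0 _ _ _ (pr2 c Hc') (derivable_pt_lim_id c)) in Hm.
    unfold g, id in Hm. rewrite !clamp_id in Hm by lra. lra.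
Qed.

Lemma cont_on_deriv_0_eq f a b : a < b -> cont_on a b f ->
  (forall t, a < t < b -> derivable_pt_lim f t 0) -> f b = f a.
Proof.
  intros Hab Hc Hd.
  destruct (cont_on_MVT f (fun _ => 0) a b Hab Hc Hd a b) as [xi [_ H]]; lra.
Qed.

Lemma deriv_0_constant f a b : a < b ->
  (forall t, a < t < b -> derivable_pt_lim f t 0) ->
  exists c, forall t, a < t < b -> f t = c.
Proof.
  intros Hab HD. exists (f ((a + b) / 2)). intros t Ht.
  assert (Hc : forall u v, a < u -> v < b -> cont_on u v f)
    by (intros u v Hu Hv; apply (cont_on_derivable u v f (fun _ => 0)); intros; apply HD; lra).
  destruct (Rtotal_order t ((a + b) / 2)) as [Hlt|[Heq|Hgt]]; [|now rewrite Heq|].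
  - symmetry; apply cont_on_deriv_0_eq; [lra|apply Hc; lra|intros; apply HD; lra].
  - apply cont_on_deriv_0_eq; [lra|apply Hc; lra|intros; apply HD; lra].
Qed.

Lemma increasing_deriv_nonneg k a b s0 l : a < s0 < b ->
  (forall s1 s2, a < s1 -> s1 < s2 -> s2 < b -> k s1 < k s2) ->
  derivable_pt_lim k s0 l -> 0 <= l.
Proof.
  intros Hs Hinc Hd. destruct (Rle_or_lt 0 l) as [|Hl]; [assumption|].
  destruct (Hd (- l) ltac:(lra)) as [[d Hdp] Hdd]; simpl in Hdd.
  set (h := Rmin (d / 2) ((b - s0) / 2)).
  assert (Hh : 0 < h) by (apply Rmin_pos; lra).
  assert (h <= d / 2) by apply Rmin_l. assert (h <= (b - s0) / 2) by apply Rmin_r.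
  specialize (Hdd h ltac:(lra) ltac:(rewrite Rabs_pos_eq; lra)).
  assert (k s0 < k (s0 + h)) by (apply Hinc; lra).
  assert (0 < (k (s0 + h) - k s0) / h) by (apply Rdiv_lt_0_compat; lra).
  apply Rabs_lt_between' in Hdd. lra.
Qed.

Lemma Rabs_div_sub_lt Q Phi G L eta eps : L <> 0 -> 0 < eps ->
  Rabs (Phi - L) < eta -> Rabs (Q - G) < eta ->
  eta <= Rabs L / 2 -> eta <= eps * (Rabs L * Rabs L) / (4 * (Rabs L + Rabs G)) ->
  Rabs (Q / Phi - G / L) < eps.
Proof.
  intros HL He H1 H2 H3 H4.
  assert (HaL : 0 < Rabs L) by now apply Rabs_pos_lt.
  assert (HG := Rabs_pos G).
  assert (HPhi : Rabs L / 2 < Rabs Phi).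
  { assert (Rabs L <= Rabs (L - Phi) + Rabs Phi).
    { replace L with ((L - Phi) + Phi) at 1 by ring. apply Rabs_triang. }
    rewrite Rabs_minus_sym in H. lra. }
  assert (HP0 : Phi <> 0) by (intro E; rewrite E, Rabs_R0 in HPhi; lra).
  replace (Q / Phi - G / L) with (((Q - G) * L - G * (Phi - L)) / (Phi * L)) by (field; auto).
  unfold Rdiv. rewrite Rabs_mult, Rabs_inv, Rabs_mult.
  assert (Hn : Rabs ((Q - G) * L - G * (Phi - L)) <= eta * Rabs L + Rabs G * eta).
  { eapply Rle_trans; [apply Rabs_triang|]. rewrite Rabs_Ropp, !Rabs_mult.
    apply Rplus_le_compat; [apply Rmult_le_compat_r|apply Rmult_le_compat_l]; lra. }
  assert (Heta : eta * (4 * (Rabs L + Rabs G)) <= eps * (Rabs L * Rabs L)).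
  { apply (Rmult_le_compat_r (4 * (Rabs L + Rabs G))) in H4; [|lra].
    unfold Rdiv in H4. rewrite Rmult_assoc, Rinv_l, Rmult_1_r in H4 by lra. exact H4. }
  assert (Hd : Rabs L * Rabs L / 2 < Rabs Phi * Rabs L) by nra.
  apply (Rmult_lt_reg_r (Rabs Phi * Rabs L)); [nra|].
  rewrite Rmult_assoc, Rinv_l, Rmult_1_r by nra. nra.
Qed.

(* The difference quotient of [k] is the quotient of those of [F] and of [f]. *)
Lemma derivable_pt_lim_comp_inner (f k F : R -> R) a b s0 L G :
  a < s0 < b -> derivable_pt_lim f (k s0) L -> L <> 0 ->
  (forall eps, 0 < eps -> exists d, 0 < d /\
      forall s, a < s < b -> Rabs (s - s0) < d -> Rabs (k s - k s0) < eps) ->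
  (forall s, a < s < b -> k s = k s0 -> s = s0) ->
  (forall s, a < s < b -> f (k s) = F s) ->
  derivable_pt_lim F s0 G ->
  derivable_pt_lim k s0 (G / L).
Proof.
  intros Hs Hf HL Hk Hinj Heq HF eps Heps.
  assert (HaL : 0 < Rabs L) by now apply Rabs_pos_lt.
  assert (HG := Rabs_pos G).
  set (eta := Rmin (Rabs L / 2) (eps * (Rabs L * Rabs L) / (4 * (Rabs L + Rabs G)))).
  assert (Heta1 : eta <= Rabs L / 2) by apply Rmin_l.
  assert (Heta2 : eta <= eps * (Rabs L * Rabs L) / (4 * (Rabs L + Rabs G))) by apply Rmin_r.
  assert (Heta : 0 < eta).
  { apply Rmin_pos; [lra|]. apply Rdiv_lt_0_compat; [|lra].
    apply Rmult_lt_0_compat; nra. }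
  destruct (Hf eta Heta) as [d1 Hd1].
  destruct (Hk d1 (cond_pos d1)) as [d2 [Hd2 Hdd2]].
  destruct (HF eta Heta) as [[d3 Hd3p] Hd3]; simpl in Hd3.
  set (d := Rmin (Rmin d2 d3) (Rmin (s0 - a) (b - s0))).
  assert (Hdp : 0 < d) by (repeat apply Rmin_pos; lra).
  exists (mkposreal _ Hdp). intros h hn hd; simpl in hd.
  assert (d <= Rmin d2 d3) by apply Rmin_l. assert (d <= Rmin (s0 - a) (b - s0)) by apply Rmin_r.
  assert (Rmin d2 d3 <= d2) by apply Rmin_l. assert (Rmin d2 d3 <= d3) by apply Rmin_r.
  assert (Rmin (s0 - a) (b - s0) <= s0 - a) by apply Rmin_l.
  assert (Rmin (s0 - a) (b - s0) <= b - s0) by apply Rmin_r.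
  assert (Hin : a < s0 + h < b) by (apply Rabs_def2 in hd; lra).
  set (m := k (s0 + h) - k s0).
  assert (Hm0 : m <> 0).
  { intro E. apply hn. assert (s0 + h = s0) by (apply Hinj; unfold m in E; lra). lra. }
  assert (Hm1 : Rabs m < d1).
  { apply Hdd2; [exact Hin|]. replace (s0 + h - s0) with h by ring. lra. }
  specialize (Hd1 m Hm0 Hm1). specialize (Hd3 h hn ltac:(lra)).
  replace (k s0 + m) with (k (s0 + h)) in Hd1 by (unfold m; ring).
  rewrite (Heq (s0 + h)), (Heq s0) in Hd1 by lra.
  assert (HF0 : F (s0 + h) - F s0 <> 0).
  { intro Z. rewrite Z in Hd1. unfold Rdiv in Hd1.
    rewrite Rmult_0_l, Rminus_0_l, Rabs_Ropp in Hd1. lra. }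
  replace (m / h) with (((F (s0 + h) - F s0) / h) / ((F (s0 + h) - F s0) / m))
    by (field; auto).
  now apply (Rabs_div_sub_lt _ _ G L eta eps).
Qed.

(** * Inverse of an increasing continuous function *)

Section IncreasingInverse.

Variables (f h : R -> R) (a b : R).
Hypothesis f_incr : forall t1 t2, a <= t1 -> t1 < t2 -> t2 <= b -> f t1 < f t2.
Hypothesis h_inv : forall s, f a <= s <= f b -> a <= h s <= b /\ f (h s) = s.

Lemma incr_le t1 t2 : a <= t1 -> t1 <= t2 -> t2 <= b -> f t1 <= f t2.
Proof.
  intros H1 H2 H3. destruct (Req_dec t1 t2) as [->|Hne]; [lra|].
  apply Rlt_le, f_incr; lra.
Qed.

Lemma incr_range t : a <= t <= b -> f a <= f t <= f b.
Proof. intros Ht; split; apply incr_le; lra. Qed.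

Lemma incr_range_open t : a < t < b -> f a < f t < f b.
Proof. intros Ht; split; apply f_incr; lra. Qed.

Lemma inverse_left t : a <= t <= b -> h (f t) = t.
Proof.
  intros Ht. destruct (h_inv (f t) (incr_range t Ht)) as [Hh Efh].
  destruct (Rtotal_order (h (f t)) t) as [Hlt|[Heq|Hgt]]; [|exact Heq|].
  - assert (f (h (f t)) < f t) by (apply f_incr; lra). lra.
  - assert (f t < f (h (f t))) by (apply f_incr; lra). lra.
Qed.

Lemma inverse_incr s1 s2 :
  f a <= s1 -> s1 < s2 -> s2 <= f b -> h s1 < h s2.
Proof.
  intros H1 H2 H3.
  destruct (h_inv s1 ltac:(lra)) as [R1 E1]. destruct (h_inv s2 ltac:(lra)) as [R2 E2].
  destruct (Rlt_or_le (h s1) (h s2)) as [|Hle]; [assumption|].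
  assert (f (h s2) <= f (h s1)) by (apply incr_le; lra). lra.
Qed.

Lemma inverse_cont_on : cont_on (f a) (f b) h.
Proof.
  intros s Hs eps He.
  destruct (h_inv s Hs) as [Ht Hst]. set (t := h s) in *.
  assert (Up : exists d, 0 < d /\
      forall u, f a <= u <= f b -> u - s < d -> h u < t + eps).
  { destruct (Rle_dec (t + eps / 2) b) as [Hl|Hl].
    - exists (f (t + eps / 2) - s). split.
      + rewrite <- Hst. assert (f t < f (t + eps / 2)) by (apply f_incr; lra). lra.
      + intros u Hu Hd. destruct (h_inv u Hu) as [Hu1 Hu2].
        destruct (Rlt_or_le (h u) (t + eps / 2)) as [|Hge]; [lra|].
        assert (f (t + eps / 2) <= f (h u)) by (apply incr_le; lra). lra.
    - exists 1; split; [lra|]. intros u Hu _. destruct (h_inv u Hu). lra. }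
  assert (Lo : exists d, 0 < d /\
      forall u, f a <= u <= f b -> s - u < d -> t - eps < h u).
  { destruct (Rle_dec a (t - eps / 2)) as [Hl|Hl].
    - exists (s - f (t - eps / 2)). split.
      + rewrite <- Hst. assert (f (t - eps / 2) < f t) by (apply f_incr; lra). lra.
      + intros u Hu Hd. destruct (h_inv u Hu) as [Hu1 Hu2].
        destruct (Rlt_or_le (t - eps / 2) (h u)) as [|Hge]; [lra|].
        assert (f (h u) <= f (t - eps / 2)) by (apply incr_le; lra). lra.
    - exists 1; split; [lra|]. intros u Hu _. destruct (h_inv u Hu). lra. }
  destruct Up as [d1 [Hd1 U]]. destruct Lo as [d2 [Hd2 Lw]].
  exists (Rmin d1 d2). split; [now apply Rmin_pos|].
  intros u Hu Hd. assert (Rmin d1 d2 <= d1) by apply Rmin_l.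
  assert (Rmin d1 d2 <= d2) by apply Rmin_r.
  apply Rabs_lt_between' in Hd.
  specialize (U u Hu ltac:(lra)). specialize (Lw u Hu ltac:(lra)).
  apply Rabs_def1; lra.
Qed.

Lemma inverse_derivable df s :
  (forall t, a < t < b -> derivable_pt_lim f t (df t)) ->
  (forall t, a < t < b -> 0 < df t) ->
  f a < s < f b -> derivable_pt_lim h s (1 / df (h s)).
Proof.
  intros Hdf Hpos Hs.
  assert (Hhs : a < h s < b).
  { assert (Hab : a <= b) by (destruct (h_inv s ltac:(lra)); lra).
    assert (h (f a) < h s) by (apply inverse_incr; lra).
    assert (h s < h (f b)) by (apply inverse_incr; lra).
    rewrite inverse_left in * by lra. lra. }
  apply (derivable_pt_lim_comp_inner f h (fun u => u) (f a) (f b) s).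
  - exact Hs.
  - now apply Hdf.
  - specialize (Hpos (h s) Hhs). lra.
  - intros eps He. destruct (inverse_cont_on s ltac:(lra) eps He) as [d [Hd K]].
    exists d; split; [exact Hd|]. intros u Hu Hdu. apply K; lra.
  - intros u Hu E. rewrite <- (proj2 (h_inv u ltac:(lra))), E. apply h_inv; lra.
  - intros u Hu. apply h_inv; lra.
  - apply derivable_pt_lim_id.
Qed.

End IncreasingInverse.

Lemma increasing_inverse f a b : a < b -> cont_on a b f ->
  (forall t1 t2, a <= t1 -> t1 < t2 -> t2 <= b -> f t1 < f t2) ->
  { h : R -> R | forall s, f a <= s <= f b -> a <= h s <= b /\ f (h s) = s }.
Proof.
  intros Hab Hc Hinc.
  assert (Hfab : f a < f b) by (apply Hinc; lra).
  assert (Hpre : forall s, { t | f a <= s <= f b -> a <= t <= b /\ f t = s }).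
  { intros s. destruct (Rle_dec (f a) s) as [H1|H1]; [destruct (Rle_dec s (f b)) as [H2|H2]|].
    - destruct (IVT_gen (fun u => f (clamp a b u)) a b s) as [t [Ht Et]].
      + apply continuity_clamp; [lra|exact Hc].
      + rewrite !clamp_id, Rmin_left, Rmax_right by lra. lra.
      + rewrite Rmin_left, Rmax_right in Ht by lra. exists t. intros _.
        rewrite clamp_id in Et by lra. auto.
    - exists a; intros; lra.
    - exists a; intros; lra. }
  exists (fun s => proj1_sig (Hpre s)). intros s. exact (proj2_sig (Hpre s)).
Qed.

Lemma rad_sq a b : rad a b ^ 2 = a ^ 2 + b ^ 2.
Proof. unfold rad. rewrite pow2_sqrt; [ring|nra]. Qed.

Lemma rad_nonneg a b : 0 <= rad a b.
Proof. apply sqrt_pos. Qed.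

Lemma rad_pos a b : rad a b <> 0 -> 0 < rad a b.
Proof. intros H. assert (Hr := rad_nonneg a b). lra. Qed.

Lemma rad_eq_0 a b : rad a b = 0 -> a = 0 /\ b = 0.
Proof. intros H. assert (Hr := rad_sq a b). rewrite H in Hr. split; nra. Qed.

(** * Keplerian motions *)

Definition newton_eqs (x y vx vy : R -> R) (a b : R) : Prop :=
  forall t, a < t < b ->
    derivable_pt_lim x t (vx t) /\ derivable_pt_lim y t (vy t) /\
    derivable_pt_lim vx t (- x t / (rad (x t) (y t)) ^ 3) /\
    derivable_pt_lim vy t (- y t / (rad (x t) (y t)) ^ 3).

Definition momentum (x y vx vy : R -> R) (t : R) : R := x t * vy t - y t * vx t.

Section Motion.

Variables (x y vx vy : R -> R) (a b : R).
Hypothesis Hnewton : newton_eqs x y vx vy a b.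

Lemma momentum_constant : a < b ->
  exists c, forall t, a < t < b -> momentum x y vx vy t = c.
Proof.
  intros Hab. apply deriv_0_constant; [exact Hab|]. intros t Ht.
  destruct (Hnewton t Ht) as (H1 & H2 & H3 & H4).
  apply is_derive_Reals in H1, H2, H3, H4. apply is_derive_Reals. unfold momentum.
  auto_derive; [solve_ex_derive|rewrite_Derive]. unfold Rdiv; ring.
Qed.

Lemma rad_derive t : a < t < b -> 0 < rad (x t) (y t) ->
  derivable_pt_lim (fun u => rad (x u) (y u)) t
    ((x t * vx t + y t * vy t) / rad (x t) (y t)).
Proof.
  intros Ht Hr. destruct (Hnewton t Ht) as (H1 & H2 & _ & _).
  assert (Hpos : 0 < x t ^ 2 + y t ^ 2) by (rewrite <- rad_sq; nra).
  apply is_derive_Reals in H1, H2. apply is_derive_Reals. unfold rad in *.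
  auto_derive; [now solve_ex_derive|rewrite_Derive].
  replace (x t * (x t * 1) + y t * (y t * 1)) with (x t ^ 2 + y t ^ 2) by ring.
  field. lra.
Qed.

Lemma radial_velocity_derive t : a < t < b -> 0 < rad (x t) (y t) ->
  derivable_pt_lim (fun u => (x u * vx u + y u * vy u) / rad (x u) (y u)) t
    ((momentum x y vx vy t ^ 2 - rad (x t) (y t)) / rad (x t) (y t) ^ 3).
Proof.
  intros Ht Hr. destruct (Hnewton t Ht) as (H1 & H2 & H3 & H4).
  assert (Hpos : 0 < x t ^ 2 + y t ^ 2) by (rewrite <- rad_sq; nra).
  apply is_derive_Reals in H1, H2, H3, H4. apply is_derive_Reals.
  unfold momentum, rad in *.
  assert (Hq : x t * (x t * 1) + y t * (y t * 1) = x t ^ 2 + y t ^ 2) by ring.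
  assert (Hs : 0 < sqrt (x t ^ 2 + y t ^ 2)) by now apply sqrt_lt_R0.
  auto_derive; rewrite ?Hq; [solve_ex_derive; lra|rewrite_Derive].
  set (s := sqrt (x t ^ 2 + y t ^ 2)) in *.
  assert (Hs2 : s ^ 2 = x t ^ 2 + y t ^ 2) by (apply pow2_sqrt; lra).
  apply Rminus_diag_uniq.
  transitivity ((s ^ 2 - (x t ^ 2 + y t ^ 2)) * ((vx t ^ 2 + vy t ^ 2) / s ^ 3 + 1 / s ^ 4)).
  - field; lra.
  - rewrite Hs2; ring.
Qed.

Variables al be ga : R.
Hypothesis Hga : 0 < ga.
Hypothesis Hconic : forall t, a < t < b -> rad (x t) (y t) = al * x t + be * y t + ga.

Lemma conic_rad_pos t : a < t < b -> 0 < rad (x t) (y t).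
Proof.
  intros Ht. apply rad_pos. intros E. specialize (Hconic t Ht).
  destruct (rad_eq_0 _ _ E) as [Ex Ey]. rewrite E, Ex, Ey in Hconic. lra.
Qed.

Lemma conic_radial_velocity t : a < t < b ->
  (x t * vx t + y t * vy t) / rad (x t) (y t) = al * vx t + be * vy t.
Proof.
  intros Ht. apply (uniqueness_limite (fun u => rad (x u) (y u)) t).
  - exact (rad_derive t Ht (conic_rad_pos t Ht)).
  - destruct (Hnewton t Ht) as (H1 & H2 & _ & _).
    apply (derivable_pt_lim_locally_eq (fun u => al * x u + be * y u + ga) _ t _ a b Ht).
    + intros u Hu; symmetry; apply Hconic, Hu.
    + apply is_derive_Reals in H1, H2. apply is_derive_Reals.
      auto_derive; [solve_ex_derive|rewrite_Derive; ring].
Qed.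

Lemma conic_momentum_sq t : a < t < b -> momentum x y vx vy t ^ 2 = ga.
Proof.
  intros Ht. assert (Hr := conic_rad_pos t Ht).
  assert (E : (momentum x y vx vy t ^ 2 - rad (x t) (y t)) / rad (x t) (y t) ^ 3
              = al * (- x t / rad (x t) (y t) ^ 3) + be * (- y t / rad (x t) (y t) ^ 3)).
  { apply (uniqueness_limite (fun u => (x u * vx u + y u * vy u) / rad (x u) (y u)) t).
    - exact (radial_velocity_derive t Ht Hr).
    - destruct (Hnewton t Ht) as (_ & _ & H3 & H4).
      apply (derivable_pt_lim_locally_eq (fun u => al * vx u + be * vy u) _ t _ a b Ht).
      + intros u Hu; symmetry; apply conic_radial_velocity, Hu.
      + apply is_derive_Reals in H3, H4. apply is_derive_Reals.
        auto_derive; [solve_ex_derive|rewrite_Derive; field; lra]. }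
  set (m := momentum x y vx vy t) in *. set (r := rad (x t) (y t)) in *.
  assert (E2 : m ^ 2 - r = - (al * x t + be * y t)).
  { replace (m ^ 2 - r) with ((m ^ 2 - r) / r ^ 3 * r ^ 3) by (field; lra).
    rewrite E. field. lra. }
  unfold r in E2. rewrite (Hconic t Ht) in E2. lra.
Qed.

End Motion.

Section Reparametrization.

Variables (X Y x y k : R -> R) (sA sB : R).
Hypothesis k_cont : cont_on sA sB k.
Hypothesis k_incr : forall s1 s2, sA <= s1 -> s1 < s2 -> s2 <= sB -> k s1 < k s2.
Hypothesis XY_comp : forall s, sA < s < sB -> X s = x (k s) /\ Y s = y (k s).

Lemma reparam_velocity s0 W1 W2 V1 V2 : sA < s0 < sB ->
  derivable_pt_lim x (k s0) W1 -> derivable_pt_lim y (k s0) W2 -> W1 ^ 2 + W2 ^ 2 <> 0 ->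
  derivable_pt_lim X s0 V1 -> derivable_pt_lim Y s0 V2 ->
  exists kd, derivable_pt_lim k s0 kd /\ V1 = kd * W1 /\ V2 = kd * W2.
Proof.
  intros Hs0 Hx Hy HW HX HY.
  set (kd := (V1 * W1 + V2 * W2) / (W1 ^ 2 + W2 ^ 2)).
  assert (Hk : derivable_pt_lim k s0 kd).
  { apply (derivable_pt_lim_comp_inner (fun u => x u * W1 + y u * W2) k
             (fun s => X s * W1 + Y s * W2) sA sB s0); [exact Hs0| |exact HW| | | |].
    - apply is_derive_Reals in Hx, Hy. apply is_derive_Reals.
      auto_derive; [solve_ex_derive|rewrite_Derive; ring].
    - intros eps He. destruct (k_cont s0 ltac:(lra) eps He) as [d [Hd K]].
      exists d; split; [exact Hd|]. intros u Hu Hdu. apply K; lra.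
    - intros u Hu E. destruct (Rtotal_order u s0) as [Hl|[Hl|Hl]]; [|exact Hl|].
      + assert (k u < k s0) by (apply k_incr; lra). lra.
      + assert (k s0 < k u) by (apply k_incr; lra). lra.
    - intros u Hu. destruct (XY_comp u Hu) as [-> ->]. reflexivity.
    - apply is_derive_Reals in HX, HY. apply is_derive_Reals.
      auto_derive; [solve_ex_derive|rewrite_Derive; ring]. }
  exists kd. split; [exact Hk|split].
  - apply (uniqueness_limite X s0); [exact HX|].
    apply (derivable_pt_lim_locally_eq (fun s => x (k s)) X s0 _ sA sB Hs0).
    + intros u Hu; symmetry; apply XY_comp, Hu.
    + rewrite Rmult_comm. exact (derivable_pt_lim_comp k x s0 kd W1 Hk Hx).
  - apply (uniqueness_limite Y s0); [exact HY|].
    apply (derivable_pt_lim_locally_eq (fun s => y (k s)) Y s0 _ sA sB Hs0).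
    + intros u Hu; symmetry; apply XY_comp, Hu.
    + rewrite Rmult_comm. exact (derivable_pt_lim_comp k y s0 kd W2 Hk Hy).
Qed.

Variables (VX VY vx vy : R -> R) (a b al be ga : R).
Hypothesis Hga : 0 < ga.
Hypothesis XY_newton : newton_eqs X Y VX VY sA sB.
Hypothesis xy_newton : newton_eqs x y vx vy a b.
Hypothesis XY_conic : forall s, sA < s < sB -> rad (X s) (Y s) = al * X s + be * Y s + ga.
Hypothesis xy_conic : forall t, a < t < b -> rad (x t) (y t) = al * x t + be * y t + ga.
Hypothesis k_range : forall s, sA < s < sB -> a < k s < b.

(* Both motions have squared angular momentum [ga], while reparametrizing
   multiplies it by the speed [k']; hence [k' = 1]. *)
Lemma reparam_unit_speed s0 : sA < s0 < sB -> derivable_pt_lim k s0 1.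
Proof.
  intros Hs0. set (u0 := k s0). assert (Hu0 := k_range s0 Hs0).
  assert (Hq := conic_momentum_sq x y vx vy a b xy_newton al be ga Hga xy_conic u0 Hu0).
  assert (HQ := conic_momentum_sq X Y VX VY sA sB XY_newton al be ga Hga XY_conic s0 Hs0).
  destruct (xy_newton u0 Hu0) as (Hx & Hy & _ & _).
  destruct (XY_newton s0 Hs0) as (HX & HY & _ & _).
  assert (HW : vx u0 ^ 2 + vy u0 ^ 2 <> 0).
  { intros E. assert (vx u0 = 0) by nra. assert (vy u0 = 0) by nra.
    unfold momentum in Hq. rewrite H, H0 in Hq. nra. }
  destruct (reparam_velocity s0 (vx u0) (vy u0) (VX s0) (VY s0) Hs0 Hx Hy HW HX HY)
    as [kd [Hk [E1 E2]]].
  destruct (XY_comp s0 Hs0) as [EX EY].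
  unfold momentum in HQ, Hq. rewrite E1, E2, EX, EY in HQ. fold u0 in HQ.
  assert (Hkd2 : kd ^ 2 = 1).
  { apply (Rmult_eq_reg_r ga); [|lra]. rewrite <- Hq at 1. rewrite <- HQ. ring. }
  assert (0 <= kd).
  { apply (increasing_deriv_nonneg k sA sB s0 kd Hs0); [|exact Hk].
    intros; apply k_incr; lra. }
  replace 1 with kd by nra. exact Hk.
Qed.

Lemma reparam_elapsed : sA < sB -> k sB - k sA = sB - sA.
Proof.
  intros Hab.
  assert (H := cont_on_deriv_0_eq (fun s => k s - s) sA sB Hab). simpl in H.
  enough (k sB - sB = k sA - sA) by lra. apply H.
  - apply (cont_on_ext _ _ (fun s => k s + (-1) * s)); [intros; ring|].
    apply cont_on_plus; [exact k_cont|apply cont_on_scal, cont_on_id].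
  - intros s Hs. assert (Dk := reparam_unit_speed s Hs).
    apply is_derive_Reals in Dk. apply is_derive_Reals.
    auto_derive; [solve_ex_derive|rewrite_Derive; ring].
Qed.

End Reparametrization.

Lemma newton_eqs_time_change (P Q W1 W2 L h : R -> R) a b a' b' :
  (forall t, a < t < b ->
    L t <> 0 /\
    derivable_pt_lim P t (L t * W1 t) /\ derivable_pt_lim Q t (L t * W2 t) /\
    derivable_pt_lim W1 t (L t * (- P t / rad (P t) (Q t) ^ 3)) /\
    derivable_pt_lim W2 t (L t * (- Q t / rad (P t) (Q t) ^ 3))) ->
  (forall s, a' < s < b' -> a < h s < b /\ derivable_pt_lim h s (1 / L (h s))) ->
  newton_eqs (fun s => P (h s)) (fun s => Q (h s))
             (fun s => W1 (h s)) (fun s => W2 (h s)) a' b'.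
Proof.
  intros Hrates Hh s Hs. destruct (Hh s Hs) as [Ht Dh].
  destruct (Hrates (h s) Ht) as (HL & DP & DQ & DW1 & DW2).
  assert (chain : forall F v, derivable_pt_lim F (h s) (L (h s) * v) ->
                              derivable_pt_lim (fun u => F (h u)) s v).
  { intros F v DF. replace v with (L (h s) * v * (1 / L (h s))) by (field; exact HL).
    exact (derivable_pt_lim_comp h F s _ _ Dh DF). }
  repeat split; apply chain; assumption.
Qed.

(** * The affine map [g] *)

Definition g_x (phi M N x1 y1 : R) : R := x1 + M * cos phi * y1 + N * cos phi.
Definition g_y (phi y1 : R) : R := sin phi * y1.

Lemma g_rel_iff phi M N x1 y1 x3 y3 : sin phi <> 0 ->
  g_rel phi M N x1 y1 x3 y3 <-> x3 = g_x phi M N x1 y1 /\ y3 = g_y phi y1.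
Proof.
  intros Hs. unfold g_rel, g_x, g_y. split; intros [-> ->]; split; field; exact Hs.
Qed.

Lemma rad_g phi M N x1 y1 : rad x1 y1 = M * y1 + N ->
  rad (g_x phi M N x1 y1) (g_y phi y1) = rad x1 y1 + cos phi * x1.
Proof.
  intros Hr. unfold g_x, g_y.
  assert (Hpc := sin2_cos2 phi). unfold Rsqr in Hpc.
  assert (Hr2 := rad_sq x1 y1). assert (Hr0 := rad_nonneg x1 y1).
  set (r := rad x1 y1) in *.
  assert (Hpos : 0 <= r + cos phi * x1).
  { assert (Hcx : (cos phi * x1) ^ 2 <= r ^ 2).
    { assert (0 <= (sin phi * x1) ^ 2) by apply pow2_ge_0.
      assert (0 <= y1 ^ 2) by apply pow2_ge_0. nra. }
    destruct (Rle_or_lt 0 (r + cos phi * x1)); [assumption|nra]. }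
  unfold rad at 1. rewrite <- (sqrt_pow2 (r + cos phi * x1) Hpos). f_equal.
  replace (x1 + M * cos phi * y1 + N * cos phi) with (x1 + cos phi * r) by (rewrite Hr; ring).
  assert (Hy : y1 ^ 2 = r ^ 2 - x1 ^ 2) by lra.
  replace ((sin phi * y1) ^ 2) with (sin phi ^ 2 * y1 ^ 2) by ring.
  replace (sin phi ^ 2) with (1 - cos phi ^ 2) by (rewrite <- Hpc; ring).
  rewrite Hy. ring.
Qed.

Lemma rad_g_conic phi M N x1 y1 : rad x1 y1 = M * y1 + N ->
  rad (g_x phi M N x1 y1) (g_y phi y1)
  = cos phi * g_x phi M N x1 y1 + M * sin phi * g_y phi y1 + N * sin phi ^ 2.
Proof.
  intros Hr. rewrite rad_g by exact Hr. unfold g_x, g_y.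
  assert (Hpc := sin2_cos2 phi). unfold Rsqr in Hpc.
  rewrite Hr. apply Rminus_diag_uniq.
  transitivity ((M * y1 + N) * (1 - (sin phi * sin phi + cos phi * cos phi))).
  - ring.
  - rewrite Hpc; ring.
Qed.

Definition clock (phi c : R) (y : R -> R) (tA t : R) : R := t + c * cos phi * (y t - y tA).
Definition clock_rate (phi c : R) (vy : R -> R) (t : R) : R := 1 + c * cos phi * vy t.

Section TimeChange.

Variables (phi M N c : R) (x y vx vy : R -> R) (tA tB : R).
Hypothesis Hphi : 0 < phi < PI.
Hypothesis HN : 0 < N.
Hypothesis Hab : tA < tB.
Hypothesis Hyc : cont_on tA tB y.
Hypothesis Hnewton : newton_eqs x y vx vy tA tB.
Hypothesis Hsigma : forall t, tA < t < tB -> rad (x t) (y t) = M * y t + N.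
Hypothesis Hc : forall t, tA < t < tB -> momentum x y vx vy t = c.

Local Notation clk := (clock phi c y tA).
Local Notation L := (clock_rate phi c vy).
Local Notation P t := (g_x phi M N (x t) (y t)).
Local Notation Q t := (g_y phi (y t)).
Local Notation wx t := ((vx t + M * cos phi * vy t) / L t).
Local Notation wy t := (sin phi * vy t / L t).

Lemma sin_phi_pos : 0 < sin phi.
Proof. apply sin_gt_0; lra. Qed.

Lemma sigma_conic t : tA < t < tB -> rad (x t) (y t) = 0 * x t + M * y t + N.
Proof. intros Ht. rewrite Hsigma by exact Ht. ring. Qed.

Lemma rad_pos_sigma t : tA < t < tB -> 0 < rad (x t) (y t).
Proof. exact (conic_rad_pos x y tA tB 0 M N HN sigma_conic t). Qed.

Lemma momentum_sq_N : c ^ 2 = N.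
Proof.
  assert (Hm : tA < (tA + tB) / 2 < tB) by lra.
  rewrite <- (Hc _ Hm).
  exact (conic_momentum_sq x y vx vy tA tB Hnewton 0 M N HN sigma_conic _ Hm).
Qed.

(* From [r' = M y'] and [x y' - y x' = c]: [r^2 y' = r' r y + c x], and
   [r - M y = N = c^2]. *)
Lemma momentum_vy_rad t : tA < t < tB -> c * vy t * rad (x t) (y t) = x t.
Proof.
  intros Ht.
  assert (Hr := rad_pos_sigma t Ht).
  assert (Hv := conic_radial_velocity x y vx vy tA tB Hnewton 0 M N HN sigma_conic t Ht).
  assert (Hm := Hc t Ht). unfold momentum in Hm.
  assert (Hr2 := rad_sq (x t) (y t)). assert (Hs := Hsigma t Ht).
  assert (Hc2 := momentum_sq_N).
  set (r := rad (x t) (y t)) in *.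
  assert (Hxv : x t * vx t + y t * vy t = r * (M * vy t)).
  { replace (M * vy t) with (0 * vx t + M * vy t) by ring. rewrite <- Hv. field. lra. }
  assert (Hrv : r * vy t * N = c * x t).
  { replace N with (r - M * y t) by lra. rewrite <- Hm.
    replace (r * vy t * (r - M * y t)) with (r ^ 2 * vy t - r * (M * vy t) * y t) by ring.
    rewrite <- Hxv, Hr2. ring. }
  apply (Rmult_eq_reg_r N); [|lra].
  replace (c * vy t * r * N) with (c * (r * vy t * N)) by ring.
  rewrite Hrv, <- Hc2. ring.
Qed.

Lemma rad_image t : tA < t < tB -> rad (P t) (Q t) = rad (x t) (y t) * L t.
Proof.
  intros Ht. rewrite rad_g by (apply Hsigma, Ht).
  unfold clock_rate. rewrite <- (momentum_vy_rad t Ht) at 2. ring.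
Qed.

Lemma clock_rate_pos t : tA < t < tB -> 0 < L t.
Proof.
  intros Ht. assert (HrL := rad_image t Ht). rewrite rad_g in HrL by (apply Hsigma, Ht).
  assert (Hr := rad_pos_sigma t Ht).
  assert (Hr2 := rad_sq (x t) (y t)).
  assert (Hpc := sin2_cos2 phi). unfold Rsqr in Hpc.
  assert (Hsp := sin_phi_pos).
  set (r := rad (x t) (y t)) in *.
  assert (Hcx : (cos phi * x t) ^ 2 < r ^ 2).
  { assert (Hc1 : cos phi ^ 2 < 1) by nra.
    assert (0 <= y t ^ 2) by apply pow2_ge_0.
    destruct (Req_dec (x t) 0) as [E|E].
    - rewrite E. nra.
    - assert (0 < (1 - cos phi ^ 2) * x t ^ 2)
        by (apply Rmult_lt_0_compat; [lra|now apply pow2_gt_0]).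
      nra. }
  assert (0 < r + cos phi * x t) by nra.
  nra.
Qed.

Lemma clock_derive t : tA < t < tB -> derivable_pt_lim clk t (L t).
Proof.
  intros Ht. destruct (Hnewton t Ht) as (_ & Hy & _ & _).
  apply is_derive_Reals in Hy. apply is_derive_Reals. unfold clock, clock_rate.
  auto_derive; [solve_ex_derive|rewrite_Derive; ring].
Qed.

Lemma clock_cont_on : cont_on tA tB clk.
Proof.
  apply cont_on_plus; [apply cont_on_id|]. apply cont_on_scal.
  apply (cont_on_ext _ _ (fun t => y t + - y tA)); [intros; ring|].
  apply cont_on_plus; [exact Hyc|apply cont_on_const].
Qed.

Lemma clock_incr t1 t2 : tA <= t1 -> t1 < t2 -> t2 <= tB -> clk t1 < clk t2.
Proof.
  intros H1 H2 H3.
  destruct (cont_on_MVT clk L tA tB Hab clock_cont_on clock_derive t1 t2 ltac:(lra) H3)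
    as [xi [Hxi E]].
  assert (0 < L xi) by (apply clock_rate_pos; lra). nra.
Qed.

Lemma clock_start : clk tA = tA.
Proof. unfold clock. ring. Qed.

Lemma image_rates t : tA < t < tB ->
  L t <> 0 /\
  derivable_pt_lim (fun u => P u) t (L t * wx t) /\
  derivable_pt_lim (fun u => Q u) t (L t * wy t) /\
  derivable_pt_lim (fun u => wx u) t (L t * (- P t / rad (P t) (Q t) ^ 3)) /\
  derivable_pt_lim (fun u => wy u) t (L t * (- Q t / rad (P t) (Q t) ^ 3)).
Proof.
  intros Ht. destruct (Hnewton t Ht) as (H1 & H2 & H3 & H4).
  assert (HL := clock_rate_pos t Ht).
  assert (Hr := rad_pos_sigma t Ht).
  assert (Hm := Hc t Ht). unfold momentum in Hm.
  assert (Hc2 := momentum_sq_N).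
  rewrite (rad_image t Ht).
  apply is_derive_Reals in H1, H2, H3, H4.
  unfold clock_rate, g_x, g_y in *.
  set (r := rad (x t) (y t)) in *.
  split; [lra|]. repeat split; apply is_derive_Reals.
  - auto_derive; [solve_ex_derive|rewrite_Derive; field; intro; lra].
  - auto_derive; [solve_ex_derive|rewrite_Derive; field; intro; lra].
  - auto_derive; [solve_ex_derive; intro; lra|rewrite_Derive].
    replace (N * cos phi) with ((x t * vy t - y t * vx t) * c * cos phi)
      by (rewrite Hm, <- Hc2; ring).
    field. split; intro; lra.
  - auto_derive; [solve_ex_derive; intro; lra|rewrite_Derive; field; split; intro; lra].
Qed.

Variable h : R -> R.
Hypothesis h_inv : forall s, clk tA <= s <= clk tB -> tA <= h s <= tB /\ clk (h s) = s.

Lemma inverse_clock_range s : clk tA < s < clk tB -> tA < h s < tB.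
Proof.
  intros Hs.
  rewrite <- (inverse_left clk h tA tB clock_incr h_inv tA),
          <- (inverse_left clk h tA tB clock_incr h_inv tB) by lra.
  split; apply (inverse_incr clk h tA tB clock_incr h_inv); lra.
Qed.

Lemma image_newton :
  newton_eqs (fun s => P (h s)) (fun s => Q (h s)) (fun s => wx (h s)) (fun s => wy (h s))
             (clk tA) (clk tB).
Proof.
  apply (newton_eqs_time_change (fun t => P t) (fun t => Q t) (fun t => wx t) (fun t => wy t)
           L h tA tB); [exact image_rates|].
  intros s Hs. split; [exact (inverse_clock_range s Hs)|].
  exact (inverse_derivable clk h tA tB clock_incr h_inv L s clock_derive clock_rate_pos Hs).
Qed.

Lemma image_arc_clock : cont_on tA tB x ->
  image_arc phi M N x y tA tB (fun s => P (h s)) (fun s => Q (h s)) (clk tA) (clk tB).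
Proof.
  intros Hxc.
  assert (Hhc := inverse_cont_on clk h tA tB clock_incr h_inv).
  assert (Hhr : forall s, clk tA <= s <= clk tB -> tA <= h s <= tB) by apply h_inv.
  split; [apply clock_incr; lra|split; [split; [|split]|]].
  - unfold g_x. apply cont_on_plus; [apply cont_on_plus|apply cont_on_const].
    + exact (cont_on_comp _ _ _ _ x h Hxc Hhc Hhr).
    + apply cont_on_scal. exact (cont_on_comp _ _ _ _ y h Hyc Hhc Hhr).
  - apply cont_on_scal. exact (cont_on_comp _ _ _ _ y h Hyc Hhc Hhr).
  - exists (fun s => wx (h s)), (fun s => wy (h s)). exact image_newton.
  - exists h. split; [|split; [|split; [|split]]].
    + apply (inverse_left clk h tA tB clock_incr h_inv); lra.
    + apply (inverse_left clk h tA tB clock_incr h_inv); lra.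
    + exact Hhc.
    + intros; apply (inverse_incr clk h tA tB clock_incr h_inv); lra.
    + intros s Hs. apply g_rel_iff; [apply Rgt_not_eq, sin_phi_pos|split; reflexivity].
Qed.

Lemma image_arc_elapsed X Y sA sB :
  image_arc phi M N x y tA tB X Y sA sB -> sB - sA = clk tB - clk tA.
Proof.
  intros (HsAB & (_ & _ & VX & VY & HXY) & h' & HhA & HhB & Hh'c & Hh'incr & Hg).
  assert (Hsp := sin_phi_pos).
  assert (Hh'r : forall s, sA <= s <= sB -> tA <= h' s <= tB).
  { intros s Hs. rewrite <- HhA, <- HhB. exact (incr_range h' sA sB Hh'incr s Hs). }
  assert (Hh'o : forall s, sA < s < sB -> tA < h' s < tB).
  { intros s Hs. rewrite <- HhA, <- HhB. exact (incr_range_open h' sA sB Hh'incr s Hs). }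
  set (k := fun s => clk (h' s)).
  assert (HXk : forall s, sA <= s <= sB -> X s = P (h (k s)) /\ Y s = Q (h (k s))).
  { intros s Hs. unfold k.
    rewrite (inverse_left clk h tA tB clock_incr h_inv) by (apply Hh'r, Hs).
    apply g_rel_iff; [lra|]. apply Hg, Hs. }
  assert (E : k sB - k sA = sB - sA).
  { apply (reparam_elapsed X Y (fun u => P (h u)) (fun u => Q (h u)) k sA sB)
      with (VX := VX) (VY := VY) (vx := fun u => wx (h u)) (vy := fun u => wy (h u))
           (a := clk tA) (b := clk tB)
           (al := cos phi) (be := M * sin phi) (ga := N * sin phi ^ 2).
    - exact (cont_on_comp _ _ _ _ clk h' clock_cont_on Hh'c Hh'r).
    - intros s1 s2 H1 H2 H3. apply clock_incr; [apply Hh'r; lra|apply Hh'incr; lra|apply Hh'r; lra].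
    - intros s Hs. apply HXk. lra.
    - apply Rmult_lt_0_compat; [lra|apply pow_lt; lra].
    - exact HXY.
    - exact image_newton.
    - intros s Hs. destruct (HXk s ltac:(lra)) as [-> ->].
      apply rad_g_conic, Hsigma, inverse_clock_range.
      exact (incr_range_open clk tA tB clock_incr (h' s) (Hh'o s Hs)).
    - intros u Hu. apply rad_g_conic, Hsigma, inverse_clock_range, Hu.
    - intros s Hs. exact (incr_range_open clk tA tB clock_incr (h' s) (Hh'o s Hs)).
    - exact HsAB. }
  unfold k in E. rewrite HhA, HhB in E. lra.
Qed.

End TimeChange.

Theorem lemma10 (phi M N : R) (x y : R -> R) (tA tB : R) :
  0 < phi < PI -> 0 < N ->
  (* Gamma: a Keplerian arc carried by Sigma, from A=(x tA,y tA) to B=(x tB,y tB) *)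
  tA < tB -> newton_sol x y tA tB ->
  (forall t, tA <= t <= tB -> on_sigma M N (x t) (y t)) ->
  y tA = y tB ->
  (exists x3 y3 sA sB, image_arc phi M N x y tA tB x3 y3 sA sB) /\
  (forall x3 y3 sA sB, image_arc phi M N x y tA tB x3 y3 sA sB ->
     sB - sA = tB - tA).
Proof.
  intros Hphi HN Hab [Hxc [Hyc [vx [vy Hnewton]]]] Hsigma HyAB.
  assert (Hsig : forall t, tA < t < tB -> rad (x t) (y t) = M * y t + N)
    by (intros t Ht; apply Hsigma; lra).
  destruct (momentum_constant x y vx vy tA tB Hnewton Hab) as [c Hc].
  destruct (increasing_inverse (clock phi c y tA) tA tB Hab
              (clock_cont_on phi c y tA tB Hyc)
              (clock_incr phi M N c x y vx vy tA tB Hphi HN Hab Hyc Hnewton Hsig Hc))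
    as [h Hh].
  assert (HtB : clock phi c y tA tB = tB) by (unfold clock; rewrite HyAB; ring).
  split.
  - pose proof (image_arc_clock phi M N c x y vx vy tA tB Hphi HN Hab Hyc Hnewton Hsig Hc
                  h Hh Hxc) as Himage.
    rewrite clock_start, HtB in Himage. eexists _, _, _, _. exact Himage.
  - intros X Y sA sB Harc.
    rewrite (image_arc_elapsed phi M N c x y vx vy tA tB Hphi HN Hab Hyc Hnewton Hsig Hc
               h Hh X Y sA sB Harc), clock_start, HtB.
    reflexivity.
Qed.
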